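(* There is a norm $\|\cdot\|$ on $c_{00}$ satisfying, for every $x\in c_{00}$, the implicit equation $$\|x\|=\max\Big\{\|x\|_\infty,\ \sup\Big\{\frac1{f(\ell)}\sum_{i=1}^\ell |||E_ix|||_{m_i}:\ \ell\in\mathbb{N},\ ((m_i,E_i))_{i=1}^\ell\ \text{admissible}\Big\}\Big\},$$ where for $m\ge2$, $|||\cdot|||_m$ is the norm on $c_{00}$ given by $|||x|||_m=\sup\{\frac1m\sum_{i=1}^m\|F_ix\|:F_1<\cdots<F_m\}$.
   Context: $c_{00}$ is the space of finitely supported real sequences on $\mathbb{N}$; $\|x\|_\infty=\max_i|x(i)|$. For $t>0$, $f(t)=\log_2(t+1)$. For $E,F\subseteq\mathbb{N}$, $E<F$ means $\max E<\min F$, and $Ex$ is the restriction of $x$ to $E$ ($Ex(i)=x(i)$ for $i\in E$, $0$ otherwise). A finite sequence of pairs $((m_i,E_i))_{i=1}^k$, with integers $m_1<\cdots<m_k$ and finite subsets $E_1<\cdots<E_k$ of $\mathbb{N}$, is admissible if $m_1\ge2$ and $f(m_{i+1})>\sum_{j=1}^i|E_j|$ for $1\le i<k$. *)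

From Stdlib Require Import Reals List Arith Lra.
Import ListNotations.
Open Scope R_scope.

(* c00: finitely supported real sequences on nat (index 0 plays the role of 1). *)
Definition c00 (x : nat -> R) : Prop :=
  exists n : nat, forall i : nat, (n <= i)%nat -> x i = 0.

(* Finite subsets of nat are represented by lists (membership = In). *)
Definition restr (E : list nat) (x : nat -> R) : nat -> R :=
  fun i => if existsb (Nat.eqb i) E then x i else 0.

Definition set_lt (E F : list nat) : Prop :=
  forall a b, In a E -> In b F -> (a < b)%nat.

Definition f (t : R) : R := ln (t + 1) / ln 2.

Definition is_norm_c00 (N : (nat -> R) -> R) : Prop :=
  (forall x y, c00 x -> c00 y -> N (fun i => x i + y i) <= N x + N y) /\
  (forall (a : R) x, c00 x -> N (fun i => a * x i) = Rabs a * N x) /\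
  (forall x, c00 x -> N x = 0 -> forall i, x i = 0).

Definition rsum (l : list R) : R := fold_right Rplus 0 l.

Definition increasing_blocks (Fs : list (list nat)) : Prop :=
  forall i j, (i < j < length Fs)%nat -> set_lt (nth i Fs nil) (nth j Fs nil).

Definition triple_set (N : (nat -> R) -> R) (m : nat) (x : nat -> R) : R -> Prop :=
  fun v => exists Fs : list (list nat),
    length Fs = m /\ increasing_blocks Fs /\
    v = / INR m * rsum (map (fun F => N (restr F x)) Fs).

Definition pdef : nat * list nat := (0%nat, nil).

(* sum_{j=1}^{i} |E_j| (with i counted from 1) *)
Definition card_prefix (A : list (nat * list nat)) (i : nat) : nat :=
  fold_right Nat.add 0%nat (map (fun p => length (snd p)) (firstn i A)).

(* admissibility of ((m_i, E_i))_{i=1}^k, k >= 1; list index i-1 holds (m_i,E_i) *)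
Definition admissible (A : list (nat * list nat)) : Prop :=
  (1 <= length A)%nat /\
  (forall i, (i < length A)%nat -> NoDup (snd (nth i A pdef))) /\
  (2 <= fst (nth 0 A pdef))%nat /\
  (forall i j, (i < j < length A)%nat ->
      (fst (nth i A pdef) < fst (nth j A pdef))%nat /\
      set_lt (snd (nth i A pdef)) (snd (nth j A pdef))) /\
  (forall i, (i + 1 < length A)%nat ->
      f (INR (fst (nth (i + 1) A pdef))) > INR (card_prefix A (i + 1))).

Definition outer_set (N : (nat -> R) -> R) (x : nat -> R) : R -> Prop :=
  fun v => exists (A : list (nat * list nat)) (ts : list R),
    admissible A /\ length ts = length A /\
    (forall i, (i < length A)%nat ->
        is_lub (triple_set N (fst (nth i A pdef)) (restr (snd (nth i A pdef)) x))
               (nth i ts 0)) /\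
    v = / f (INR (length A)) * rsum ts.

(* The right-hand side of the implicit equation defines an operator N |-> rhs N that is
   monotone in N and maps the class of "sandwiched" seminorms, subadditive and absolutely
   homogeneous with ||x||_oo <= N x <= ||x||_1, into itself.  The upper bound survives
   because f >= 1 and the sets E_i of an admissible sequence are disjoint, and it keeps
   every supremum involved finite.  As in the Knaster-Tarski theorem, the pointwise
   supremum of all sandwiched N with N <= rhs N is then a fixed point of rhs. *)

From Stdlib Require Import Reals List Arith Lra Lia.
From Stdlib Require Import ClassicalEpsilon FunctionalExtensionality.
Import ListNotations.
Open Scope R_scope.

Definition vanish (n : nat) (x : nat -> R) : Prop := forall i, (n <= i)%nat -> x i = 0.

Fixpoint l1 (n : nat) (x : nat -> R) : R :=
  match n with O => 0 | S k => l1 k x + Rabs (x k) end.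

Lemma l1_nonneg n x : 0 <= l1 n x.
Proof. induction n; simpl; [lra|]. pose proof (Rabs_pos (x n)); lra. Qed.

Lemma Rabs_le_l1 n x i : vanish n x -> Rabs (x i) <= l1 n x.
Proof.
  intro hx. destruct (Nat.lt_ge_cases i n) as [hi|hi].
  - clear hx. induction n as [|n IH]; simpl; [lia|].
    destruct (Nat.eq_dec i n) as [->|ne].
    + pose proof (l1_nonneg n x); lra.
    + pose proof (Rabs_pos (x n)). specialize (IH ltac:(lia)); lra.
  - rewrite (hx i hi), Rabs_R0. apply l1_nonneg.
Qed.

Lemma existsb_eqb_In (E : list nat) k : existsb (Nat.eqb k) E = true <-> In k E.
Proof.
  rewrite existsb_exists. split.
  - intros [j [hj e]]. apply Nat.eqb_eq in e. now subst.
  - intro hk. exists k. split; [exact hk|apply Nat.eqb_refl].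
Qed.

Lemma vanish_restr n E x : vanish n x -> vanish n (restr E x).
Proof. intros h i hi. unfold restr. destruct existsb; [apply h; exact hi|reflexivity]. Qed.

Lemma c00_restr E x : c00 x -> c00 (restr E x).
Proof. intros [n h]. exists n. apply vanish_restr. exact h. Qed.

Lemma c00_add x y : c00 x -> c00 y -> c00 (fun i => x i + y i).
Proof.
  intros [n hn] [m hm]. exists (Nat.max n m). intros i hi.
  rewrite hn, hm by lia. lra.
Qed.

Lemma c00_scale a x : c00 x -> c00 (fun i => a * x i).
Proof. intros [n hn]. exists n. intros i hi. rewrite hn by lia. lra. Qed.

Lemma restr_add E x y : restr E (fun i => x i + y i) = fun i => restr E x i + restr E y i.
Proof. apply functional_extensionality. intro i. unfold restr. destruct existsb; lra. Qed.

Lemma restr_scale E a x : restr E (fun i => a * x i) = fun i => a * restr E x i.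
Proof. apply functional_extensionality. intro i. unfold restr. destruct existsb; lra. Qed.

Lemma l1_restr_le n E x : l1 n (restr E x) <= l1 n x.
Proof.
  induction n; simpl; [lra|]. unfold restr at 2.
  destruct existsb; [lra|]. rewrite Rabs_R0. pose proof (Rabs_pos (x n)). lra.
Qed.

Lemma l1_restr_nil n x : l1 n (restr [] x) = 0.
Proof. induction n; simpl; [reflexivity|]. rewrite IHn. unfold restr. simpl. rewrite Rabs_R0. lra. Qed.

Lemma Rabs_restr_app E F x k : (forall k, In k E -> In k F -> False) ->
  Rabs (restr (E ++ F) x k) = Rabs (restr E x k) + Rabs (restr F x k).
Proof.
  intro hEF. unfold restr. rewrite existsb_app.
  destruct (existsb (Nat.eqb k) E) eqn:hE, (existsb (Nat.eqb k) F) eqn:hF; simpl;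
    rewrite ?Rabs_R0; try lra.
  exfalso. apply (hEF k); apply existsb_eqb_In; assumption.
Qed.

Lemma l1_restr_app n E F x : (forall k, In k E -> In k F -> False) ->
  l1 n (restr (E ++ F) x) = l1 n (restr E x) + l1 n (restr F x).
Proof.
  intro hEF. induction n; simpl; [lra|].
  rewrite IHn, Rabs_restr_app by exact hEF. lra.
Qed.

Lemma increasing_blocks_tail E Es : increasing_blocks (E :: Es) -> increasing_blocks Es.
Proof. intros h i j hij. apply (h (S i) (S j)). simpl. lia. Qed.

Lemma l1_restr_concat n Es x : increasing_blocks Es ->
  rsum (map (fun E => l1 n (restr E x)) Es) = l1 n (restr (concat Es) x).
Proof.
  induction Es as [|E Es IH]; intro hEs; simpl.
  - now rewrite l1_restr_nil.
  - rewrite IH by exact (increasing_blocks_tail E Es hEs).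
    rewrite l1_restr_app; [reflexivity|].
    intros k hkE hk. apply in_concat in hk as [E' [hE' hkE']].
    destruct (In_nth Es E' nil hE') as [j [hj <-]].
    specialize (hEs 0%nat (S j) ltac:(simpl; lia) k k hkE hkE'). lia.
Qed.

Lemma l1_blocks_le n Es x : increasing_blocks Es ->
  rsum (map (fun E => l1 n (restr E x)) Es) <= l1 n x.
Proof. intro h. rewrite l1_restr_concat by exact h. apply l1_restr_le. Qed.

Record sublinear (G : (nat -> R) -> R) : Prop := {
  sublinear_add : forall x y, c00 x -> c00 y -> G (fun i => x i + y i) <= G x + G y;
  sublinear_scale : forall a x, c00 x -> G (fun i => a * x i) <= Rabs a * G x }.

Lemma sublinear_scale_eq G a x : sublinear G -> (forall z, c00 z -> 0 <= G z) -> c00 x ->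
  G (fun i => a * x i) = Rabs a * G x.
Proof.
  intros [_ hscale] hpos hx.
  destruct (Req_dec a 0) as [->|ha].
  - pose proof (hscale 0 x hx). pose proof (hpos _ (c00_scale 0 x hx)).
    rewrite Rabs_R0 in *. lra.
  - apply Rle_antisym; [now apply hscale|].
    pose proof (hscale (/ a) _ (c00_scale a x hx)) as h. cbv beta in h.
    replace (fun i => / a * (a * x i)) with x in h
      by (apply functional_extensionality; intro i; field; exact ha).
    rewrite Rabs_inv in h.
    pose proof (Rabs_pos_lt a ha).
    apply Rmult_le_compat_l with (r := Rabs a) in h; [|lra].
    rewrite <- Rmult_assoc, Rinv_r in h by lra. lra.
Qed.

Lemma sublinear_Rabs_coord i : sublinear (fun x => Rabs (x i)).
Proof.
  split.
  - intros x y _ _. apply Rabs_triang.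
  - intros a x _. rewrite Rabs_mult. lra.
Qed.

Lemma sublinear_restr G E : sublinear G -> sublinear (fun x => G (restr E x)).
Proof.
  intros [hadd hscale]. split.
  - intros x y hx hy. rewrite restr_add. apply hadd; now apply c00_restr.
  - intros a x hx. rewrite restr_scale. apply hscale; now apply c00_restr.
Qed.

Lemma sublinear_rsum {A : Type} (G : A -> (nat -> R) -> R) l :
  (forall z, In z l -> sublinear (G z)) -> sublinear (fun x => rsum (map (fun z => G z x) l)).
Proof.
  induction l as [|z l IH]; intro hG; split; simpl.
  - intros; lra.
  - intros; lra.
  - intros x y hx hy.
    pose proof (sublinear_add _ (hG z (or_introl eq_refl)) x y hx hy).
    pose proof (sublinear_add _ (IH (fun w hw => hG w (or_intror hw))) x y hx hy).
    simpl in *. lra.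
  - intros a x hx.
    pose proof (sublinear_scale _ (hG z (or_introl eq_refl)) a x hx).
    pose proof (sublinear_scale _ (IH (fun w hw => hG w (or_intror hw))) a x hx).
    simpl in *. lra.
Qed.

Lemma sublinear_mult c G : 0 <= c -> sublinear G -> sublinear (fun x => c * G x).
Proof.
  intros hc [hadd hscale]. split.
  - intros x y hx hy. specialize (hadd x y hx hy). nra.
  - intros a x hx. specialize (hscale a x hx). nra.
Qed.

Lemma sublinear_Rmax G1 G2 : sublinear G1 -> sublinear G2 ->
  sublinear (fun x => Rmax (G1 x) (G2 x)).
Proof.
  intros [hadd1 hscale1] [hadd2 hscale2]. split.
  - intros x y hx hy.
    pose proof (Rmax_l (G1 x) (G2 x)). pose proof (Rmax_r (G1 x) (G2 x)).
    pose proof (Rmax_l (G1 y) (G2 y)). pose proof (Rmax_r (G1 y) (G2 y)).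
    apply Rmax_lub.
    + specialize (hadd1 x y hx hy). lra.
    + specialize (hadd2 x y hx hy). lra.
  - intros a x hx. pose proof (Rabs_pos a).
    apply Rmax_lub.
    + eapply Rle_trans; [now apply hscale1|]. apply Rmult_le_compat_l; [lra|apply Rmax_l].
    + eapply Rle_trans; [now apply hscale2|]. apply Rmult_le_compat_l; [lra|apply Rmax_r].
Qed.

Definition image_set {I : Type} (J : I -> Prop) (g : I -> R) (v : R) : Prop :=
  exists i, J i /\ v = g i.

(* [epsilon] returns an arbitrary real when the set has no least upper bound. *)
Definition sup_over {I : Type} (J : I -> Prop) (G : I -> (nat -> R) -> R) (x : nat -> R) : R :=
  epsilon (inhabits 0) (is_lub (image_set J (fun i => G i x))).

Lemma is_lub_ext (P Q : R -> Prop) s : (forall v, P v <-> Q v) -> is_lub P s -> is_lub Q s.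
Proof. unfold is_lub, is_upper_bound. firstorder. Qed.

Section SupOver.

Variables (I : Type) (J : I -> Prop) (G : I -> (nat -> R) -> R).
Hypothesis J_inhabited : exists i, J i.
Hypothesis G_le_l1 : forall i n x, J i -> vanish n x -> G i x <= l1 n x.

Lemma sup_over_is_lub x : c00 x -> is_lub (image_set J (fun i => G i x)) (sup_over J G x).
Proof.
  intros [n hn]. unfold sup_over. apply epsilon_spec. destruct J_inhabited as [i0 hi0].
  destruct (completeness (image_set J (fun i => G i x))) as [s hs].
  - exists (l1 n x). intros v [i [hi ->]]. now apply G_le_l1.
  - exists (G i0 x), i0. now split.
  - now exists s.
Qed.

Lemma le_sup_over i x : c00 x -> J i -> G i x <= sup_over J G x.
Proof. intros hx hi. apply (sup_over_is_lub x hx). now exists i. Qed.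

Lemma sup_over_le x b : c00 x -> (forall i, J i -> G i x <= b) -> sup_over J G x <= b.
Proof. intros hx hb. apply (sup_over_is_lub x hx). intros v [i [hi ->]]. now apply hb. Qed.

Lemma sup_over_le_l1 n x : vanish n x -> sup_over J G x <= l1 n x.
Proof. intro hx. apply sup_over_le; [now exists n|]. intros i hi. now apply G_le_l1. Qed.

Lemma sublinear_sup_over : (forall i, J i -> sublinear (G i)) -> sublinear (sup_over J G).
Proof.
  intro hG. split.
  - intros x y hx hy. apply sup_over_le; [now apply c00_add|]. intros i hi.
    pose proof (sublinear_add _ (hG i hi) x y hx hy).
    pose proof (le_sup_over i x hx hi). pose proof (le_sup_over i y hy hi). lra.
  - intros a x hx. apply sup_over_le; [now apply c00_scale|]. intros i hi.
    eapply Rle_trans; [now apply (sublinear_scale _ (hG i hi))|].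
    apply Rmult_le_compat_l; [apply Rabs_pos|now apply le_sup_over].
Qed.

End SupOver.

Lemma sup_over_mono {I : Type} (J : I -> Prop) (G1 G2 : I -> (nat -> R) -> R) x :
  (exists i, J i) ->
  (forall i n x, J i -> vanish n x -> G1 i x <= l1 n x) ->
  (forall i n x, J i -> vanish n x -> G2 i x <= l1 n x) ->
  c00 x -> (forall i, J i -> G1 i x <= G2 i x) -> sup_over J G1 x <= sup_over J G2 x.
Proof.
  intros hJ hG1 hG2 hx hle. apply sup_over_le; auto. intros i hi.
  eapply Rle_trans; [now apply hle|]. now apply le_sup_over.
Qed.

Record sandwiched (N : (nat -> R) -> R) : Prop := {
  sandwiched_sublinear : sublinear N;
  Rabs_le_sandwiched : forall x i, c00 x -> Rabs (x i) <= N x;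
  sandwiched_le_l1 : forall n x, vanish n x -> N x <= l1 n x }.

Lemma sandwiched_is_norm N : sandwiched N -> is_norm_c00 N.
Proof.
  intros [hsub hcoord _].
  assert (hpos : forall x, c00 x -> 0 <= N x).
  { intros x hx. pose proof (Rabs_pos (x 0%nat)). pose proof (hcoord x 0%nat hx). lra. }
  split; [|split].
  - exact (sublinear_add N hsub).
  - intros a x hx. now apply sublinear_scale_eq.
  - intros x hx h0 i. specialize (hcoord x i hx). rewrite h0 in hcoord.
    destruct (Req_dec (x i) 0) as [e|ne]; [exact e|].
    pose proof (Rabs_pos_lt _ ne). lra.
Qed.

Definition supnorm : (nat -> R) -> R := sup_over (fun _ : nat => True) (fun i x => Rabs (x i)).

Lemma supnorm_is_lub x : c00 x -> is_lub (fun v => exists i, v = Rabs (x i)) (supnorm x).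
Proof.
  intro hx. apply is_lub_ext with (image_set (fun _ => True) (fun i => Rabs (x i))).
  - intro v. unfold image_set. firstorder.
  - exact (sup_over_is_lub _ _ _ (ex_intro _ 0%nat I) (fun i n x _ => Rabs_le_l1 n x i) x hx).
Qed.

Lemma sandwiched_supnorm : sandwiched supnorm.
Proof.
  pose proof (ex_intro (fun _ : nat => True) 0%nat I) as hJ.
  pose proof (fun i n x (_ : True) => Rabs_le_l1 n x i) as hG.
  split.
  - apply (sublinear_sup_over _ _ _ hJ hG). intros i _. apply sublinear_Rabs_coord.
  - intros x i hx. exact (le_sup_over _ _ _ hJ hG i x hx I).
  - exact (sup_over_le_l1 _ _ _ hJ hG).
Qed.

Lemma rsum_map_le {A : Type} (g h : A -> R) l :
  (forall z, In z l -> g z <= h z) -> rsum (map g l) <= rsum (map h l).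
Proof.
  induction l as [|z l IH]; simpl; intro hgh; [lra|].
  apply Rplus_le_compat; [now apply hgh; left|]. apply IH. intros w hw. now apply hgh; right.
Qed.

Lemma Rinv_INR_nonneg m : 0 <= / INR m.
Proof.
  destruct m as [|m]; [simpl; rewrite Rinv_0; lra|].
  apply Rlt_le, Rinv_0_lt_compat, lt_0_INR. lia.
Qed.

Lemma avg_le {A : Type} (g : A -> R) l c : 0 <= c -> (forall z, In z l -> g z <= c) ->
  / INR (length l) * rsum (map g l) <= c.
Proof.
  intros hc hg.
  assert (hsum : rsum (map g l) <= INR (length l) * c).
  { clear hc. induction l as [|z l IH]; [simpl; lra|].
    change (g z + rsum (map g l) <= INR (S (length l)) * c). rewrite S_INR. pose proof (hg z (or_introl eq_refl)).
    specialize (IH (fun w hw => hg w (or_intror hw))). lra. }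
  destruct (length l) as [|k]; [simpl; rewrite Rinv_0; lra|].
  assert (0 < INR (S k)) by (apply lt_0_INR; lia).
  apply Rmult_le_reg_l with (INR (S k)); [assumption|].
  rewrite <- Rmult_assoc, Rinv_r by lra. lra.
Qed.

Definition blocks (m : nat) (Fs : list (list nat)) : Prop :=
  length Fs = m /\ increasing_blocks Fs.

Definition block_avg (N : (nat -> R) -> R) (m : nat) (Fs : list (list nat)) (y : nat -> R) : R :=
  / INR m * rsum (map (fun F => N (restr F y)) Fs).

Definition triple_norm (N : (nat -> R) -> R) (m : nat) : (nat -> R) -> R :=
  sup_over (blocks m) (block_avg N m).

Lemma blocks_inhabited m : exists Fs, blocks m Fs.
Proof.
  exists (repeat nil m). split; [apply repeat_length|].
  intros i j _ a b ha. rewrite nth_repeat in ha. destruct ha.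
Qed.

Lemma block_avg_le_l1 N m : sandwiched N ->
  forall Fs n y, blocks m Fs -> vanish n y -> block_avg N m Fs y <= l1 n y.
Proof.
  intros hN Fs n y [<- _] hy. apply avg_le; [apply l1_nonneg|]. intros F _.
  eapply Rle_trans; [apply (sandwiched_le_l1 N hN), vanish_restr, hy|apply l1_restr_le].
Qed.

Lemma sublinear_block_avg N m Fs : sublinear N -> sublinear (block_avg N m Fs).
Proof.
  intro hN. apply sublinear_mult; [apply Rinv_INR_nonneg|].
  apply (sublinear_rsum (fun F y => N (restr F y))). intros F _. now apply sublinear_restr.
Qed.

Lemma block_avg_mono N1 N2 m Fs y : (forall z, c00 z -> N1 z <= N2 z) -> c00 y ->
  block_avg N1 m Fs y <= block_avg N2 m Fs y.
Proof.
  intros hle hy. apply Rmult_le_compat_l; [apply Rinv_INR_nonneg|].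
  apply rsum_map_le. intros F _. now apply hle, c00_restr.
Qed.

Section TripleNorm.

Variables (N : (nat -> R) -> R) (m : nat).
Hypothesis hN : sandwiched N.

Lemma triple_set_is_lub y : c00 y -> is_lub (triple_set N m y) (triple_norm N m y).
Proof.
  intro hy. apply is_lub_ext with (image_set (blocks m) (fun Fs => block_avg N m Fs y)).
  - intro v. unfold image_set, blocks, block_avg, triple_set. firstorder.
  - exact (sup_over_is_lub _ _ _ (blocks_inhabited m) (block_avg_le_l1 N m hN) y hy).
Qed.

Lemma triple_norm_le_l1 n y : vanish n y -> triple_norm N m y <= l1 n y.
Proof. exact (sup_over_le_l1 _ _ _ (blocks_inhabited m) (block_avg_le_l1 N m hN) n y). Qed.

Lemma sublinear_triple_norm : sublinear (triple_norm N m).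
Proof.
  apply (sublinear_sup_over _ _ _ (blocks_inhabited m) (block_avg_le_l1 N m hN)).
  intros Fs _. exact (sublinear_block_avg N m Fs (sandwiched_sublinear N hN)).
Qed.

End TripleNorm.

Lemma triple_norm_mono N1 N2 m y : sandwiched N1 -> sandwiched N2 ->
  (forall z, c00 z -> N1 z <= N2 z) -> c00 y -> triple_norm N1 m y <= triple_norm N2 m y.
Proof.
  intros h1 h2 hle hy.
  apply (sup_over_mono _ _ _ y (blocks_inhabited m) (block_avg_le_l1 N1 m h1)
           (block_avg_le_l1 N2 m h2) hy).
  intros Fs _. now apply block_avg_mono.
Qed.

Lemma f_ge_1 l : (1 <= l)%nat -> 1 <= f (INR l).
Proof.
  intro hl. unfold f, Rdiv. pose proof ln_lt_2.
  assert (h2 : 2 <= INR l + 1) by (apply le_INR in hl; simpl in hl; lra).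
  assert (ln 2 <= ln (INR l + 1)).
  { destruct (Rle_lt_or_eq_dec _ _ h2) as [h|<-]; [|lra].
    apply Rlt_le, ln_increasing; lra. }
  apply Rmult_le_reg_r with (ln 2); [lra|].
  rewrite Rmult_assoc, Rinv_l by lra. lra.
Qed.

Lemma admissible_weight A : admissible A -> 0 < / f (INR (length A)) <= 1.
Proof.
  intros [hl _]. pose proof (f_ge_1 _ hl). split.
  - apply Rinv_0_lt_compat. lra.
  - rewrite <- Rinv_1. apply Rinv_le_contravar; lra.
Qed.

Lemma admissible_singleton : admissible [(2%nat, nil)].
Proof.
  split; [simpl; lia|]. split; [|split; [simpl; lia|split]].
  - intros i hi. replace i with 0%nat by (simpl in hi; lia). constructor.
  - intros i j h. simpl in h. lia.
  - intros i h. simpl in h. lia.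
Qed.

Lemma admissible_increasing_blocks A : admissible A -> increasing_blocks (map snd A).
Proof.
  intros (_ & _ & _ & hord & _) i j hij. rewrite length_map in hij.
  assert (e : forall k, nth k (map snd A) nil = snd (nth k A pdef))
    by (intro k; exact (map_nth snd A pdef k)).
  rewrite !e. apply hord, hij.
Qed.

Lemma admissible_inhabited : exists A, admissible A.
Proof. exact (ex_intro _ _ admissible_singleton). Qed.

Definition outer_avg (N : (nat -> R) -> R) (A : list (nat * list nat)) (x : nat -> R) : R :=
  / f (INR (length A)) * rsum (map (fun p => triple_norm N (fst p) (restr (snd p) x)) A).

Definition outer_norm (N : (nat -> R) -> R) : (nat -> R) -> R :=
  sup_over admissible (outer_avg N).

Lemma outer_avg_le_l1 N : sandwiched N ->
  forall A n x, admissible A -> vanish n x -> outer_avg N A x <= l1 n x.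
Proof.
  intros hN A n x hA hx.
  assert (hsum : rsum (map (fun p => triple_norm N (fst p) (restr (snd p) x)) A) <= l1 n x).
  { eapply Rle_trans; [|apply (l1_blocks_le n (map snd A) x), admissible_increasing_blocks, hA].
    rewrite map_map. apply rsum_map_le. intros p _.
    now apply triple_norm_le_l1, vanish_restr. }
  pose proof (admissible_weight A hA). pose proof (l1_nonneg n x).
  unfold outer_avg. nra.
Qed.

Lemma sublinear_outer_avg N A : sandwiched N -> admissible A -> sublinear (outer_avg N A).
Proof.
  intros hN hA. apply sublinear_mult; [apply Rlt_le, admissible_weight, hA|].
  apply (sublinear_rsum (fun p x => triple_norm N (fst p) (restr (snd p) x))).
  intros p _. now apply sublinear_restr, sublinear_triple_norm.
Qed.

Section OuterNorm.

Variable N : (nat -> R) -> R.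
Hypothesis hN : sandwiched N.

Lemma outer_set_is_lub x : c00 x -> is_lub (outer_set N x) (outer_norm N x).
Proof.
  intro hx. apply is_lub_ext with (image_set admissible (fun A => outer_avg N A x)).
  2: exact (sup_over_is_lub _ _ _ admissible_inhabited (outer_avg_le_l1 N hN) x hx).
  set (g := fun p : nat * list nat => triple_norm N (fst p) (restr (snd p) x)).
  assert (hnth : forall A i, (i < length A)%nat -> nth i (map g A) 0 = g (nth i A pdef)).
  { intros A i hi. rewrite (nth_indep _ _ (g pdef)) by (rewrite length_map; lia).
    apply map_nth. }
  intro v. split.
  - intros (A & hA & ->). exists A, (map g A).
    split; [exact hA|split; [apply length_map|split; [|reflexivity]]].
    intros i hi. rewrite hnth by exact hi. apply triple_set_is_lub; [exact hN|now apply c00_restr].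
  - intros (A & ts & hA & hlen & hts & ->). exists A. split; [exact hA|].
    unfold outer_avg. fold g. f_equal. f_equal.
    apply nth_ext with 0 0; [now rewrite length_map|].
    intros i hi. rewrite hnth by lia.
    apply (is_lub_u _ _ _ (hts i ltac:(lia))), triple_set_is_lub, c00_restr; [exact hN|exact hx].
Qed.

Lemma outer_norm_le_l1 n x : vanish n x -> outer_norm N x <= l1 n x.
Proof. exact (sup_over_le_l1 _ _ _ admissible_inhabited (outer_avg_le_l1 N hN) n x). Qed.

Lemma sublinear_outer_norm : sublinear (outer_norm N).
Proof.
  apply (sublinear_sup_over _ _ _ admissible_inhabited (outer_avg_le_l1 N hN)).
  intros A hA. now apply sublinear_outer_avg.
Qed.

End OuterNorm.

Lemma outer_norm_mono N1 N2 x : sandwiched N1 -> sandwiched N2 ->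
  (forall z, c00 z -> N1 z <= N2 z) -> c00 x -> outer_norm N1 x <= outer_norm N2 x.
Proof.
  intros h1 h2 hle hx.
  apply (sup_over_mono _ _ _ x admissible_inhabited (outer_avg_le_l1 N1 h1) (outer_avg_le_l1 N2 h2) hx).
  intros A hA. apply Rmult_le_compat_l; [apply Rlt_le, admissible_weight, hA|].
  apply rsum_map_le. intros p _. now apply triple_norm_mono, c00_restr.
Qed.

Definition rhs (N : (nat -> R) -> R) (x : nat -> R) : R := Rmax (supnorm x) (outer_norm N x).

Lemma sandwiched_rhs N : sandwiched N -> sandwiched (rhs N).
Proof.
  intro hN. split.
  - apply sublinear_Rmax; [exact (sandwiched_sublinear _ sandwiched_supnorm)|].
    now apply sublinear_outer_norm.
  - intros x i hx. eapply Rle_trans; [exact (Rabs_le_sandwiched _ sandwiched_supnorm x i hx)|].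
    apply Rmax_l.
  - intros n x hx. apply Rmax_lub; [|now apply outer_norm_le_l1].
    exact (sandwiched_le_l1 _ sandwiched_supnorm n x hx).
Qed.

Lemma rhs_mono N1 N2 x : sandwiched N1 -> sandwiched N2 ->
  (forall z, c00 z -> N1 z <= N2 z) -> c00 x -> rhs N1 x <= rhs N2 x.
Proof.
  intros h1 h2 hle hx. apply Rmax_lub; [apply Rmax_l|].
  eapply Rle_trans; [exact (outer_norm_mono N1 N2 x h1 h2 hle hx)|apply Rmax_r].
Qed.

Definition subsolution (N : (nat -> R) -> R) : Prop :=
  sandwiched N /\ forall x, c00 x -> N x <= rhs N x.

Definition tnorm : (nat -> R) -> R := sup_over subsolution (fun N x => N x).

Lemma subsolution_supnorm : subsolution supnorm.
Proof. split; [exact sandwiched_supnorm|]. intros x _. apply Rmax_l. Qed.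

Lemma subsolution_le_l1 N n x : subsolution N -> vanish n x -> N x <= l1 n x.
Proof. intros [hN _]. exact (sandwiched_le_l1 N hN n x). Qed.

Lemma le_tnorm N x : subsolution N -> c00 x -> N x <= tnorm x.
Proof.
  intros hN hx.
  exact (le_sup_over _ _ _ (ex_intro _ _ subsolution_supnorm) subsolution_le_l1 N x hx hN).
Qed.

Lemma sandwiched_tnorm : sandwiched tnorm.
Proof.
  pose proof (ex_intro _ _ subsolution_supnorm) as hJ. split.
  - apply (sublinear_sup_over _ _ _ hJ subsolution_le_l1).
    intros N [hN _]. exact (sandwiched_sublinear N hN).
  - intros x i hx. eapply Rle_trans; [exact (Rabs_le_sandwiched _ sandwiched_supnorm x i hx)|].
    exact (le_tnorm supnorm x subsolution_supnorm hx).
  - exact (sup_over_le_l1 _ _ _ hJ subsolution_le_l1).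
Qed.

Lemma subsolution_tnorm : subsolution tnorm.
Proof.
  split; [exact sandwiched_tnorm|]. intros x hx.
  apply (sup_over_le _ _ _ (ex_intro _ _ subsolution_supnorm) subsolution_le_l1 x _ hx).
  intros N [hN hNrhs]. eapply Rle_trans; [now apply hNrhs|].
  apply rhs_mono; auto using sandwiched_tnorm. intros z hz. now apply le_tnorm.
Qed.

Lemma tnorm_fixpoint x : c00 x -> tnorm x = rhs tnorm x.
Proof.
  intro hx. apply Rle_antisym; [now apply subsolution_tnorm|].
  apply le_tnorm; [|exact hx]. split; [apply sandwiched_rhs, sandwiched_tnorm|].
  intros z hz. apply rhs_mono; auto using sandwiched_tnorm, sandwiched_rhs.
  apply subsolution_tnorm.
Qed.

Theorem proposition2p3 :
  exists N : (nat -> R) -> R,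
    is_norm_c00 N /\
    (forall (m : nat) (y : nat -> R), (2 <= m)%nat -> c00 y ->
        exists t : R, is_lub (triple_set N m y) t) /\
    (forall x : nat -> R, c00 x ->
        exists a s : R,
          is_lub (fun v => exists i : nat, v = Rabs (x i)) a /\
          is_lub (outer_set N x) s /\
          N x = Rmax a s).
Proof.
  exists tnorm. split; [|split].
  - apply sandwiched_is_norm, sandwiched_tnorm.
  - intros m y _ hy. exists (triple_norm tnorm m y).
    apply triple_set_is_lub; [exact sandwiched_tnorm|exact hy].
  - intros x hx. exists (supnorm x), (outer_norm tnorm x). split; [|split].
    + now apply supnorm_is_lub.
    + apply outer_set_is_lub; [exact sandwiched_tnorm|exact hx].
    + now apply tnorm_fixpoint.
Qed.
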